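(* Let $d\ge2$ and let $G$ be a closed convex germ with $\overline{\mathrm{conv}}(\Delta_{\rm e}\cup B_{\rm i})\subseteq G$. If $G$ is not a qplex, then there are uncountably many distinct qplexes containing $G$.
   Context: Fix an integer $d\ge 2$. $\langle\cdot,\cdot\rangle$ is the standard inner product on $\mathbb{R}^{d^2}$, $\|\cdot\|$ the Euclidean norm. $\Delta=\{p\in\mathbb{R}^{d^2}: p(i)\ge0,\ \sum_ip(i)=1\}$; $H=\{u\in\mathbb{R}^{d^2}:\sum_i u(i)=1\}$; $c=(1/d^2,\dots,1/d^2)$. $\overline{\mathrm{conv}}(X)$ denotes the closed convex hull. For $A\subseteq H$ the polar is $A^*=\{u\in H:\langle u,v\rangle\ge\frac{1}{d(d+1)}\ \forall v\in A\}$. Out-ball: $B_{\rm o}=\{u\in H:\|u-c\|\le r_{\rm o}\}$, $r_{\rm o}^2=\frac{d-1}{d^2(d+1)}$. In-ball: $B_{\rm i}=\{u\in H:\|u-c\|\le r_{\rm i}\}$, $r_{\rm i}^2=\frac{1}{d^2(d^2-1)}$. Basis distributions: $e_k(i)=\frac{1}{d+1}(\delta_{ki}+\frac1d)$; basis simplex $\Delta_{\rm e}=\mathrm{conv}\{e_1,\dots,e_{d^2}\}$. A subset $A\subseteq\Delta$ is a germ if $\frac{1}{d(d+1)}\le\langle p,s\rangle\le\frac{2}{d(d+1)}$ for all $p,s\in A$. A qplex is a set $Q\subseteq\Delta\cap B_{\rm o}$ with $Q^*=Q$. *)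

From Stdlib Require Import Reals.
From mathcomp Require Import all_boot.
Set Implicit Arguments. Unset Strict Implicit.

Local Open Scope R_scope.

Definition vec (d : nat) : Type := 'I_(d * d) -> R.

Definition vset (d : nat) : Type := vec d -> Prop.

Definition rsum (d : nat) (f : 'I_(d * d) -> R) : R :=
  \big[Rplus/0]_(i < d * d) f i.

Definition inner (d : nat) (u v : vec d) : R := rsum (fun i => u i * v i).
Definition vnorm (d : nat) (u : vec d) : R := sqrt (inner u u).
Definition vsub (d : nat) (u v : vec d) : vec d := fun i => u i - v i.

Definition Delta (d : nat) : vset d :=
  fun p => (forall i, 0 <= p i) /\ rsum p = 1.
Definition Hplane (d : nat) : vset d := fun u => rsum u = 1.
Definition cen (d : nat) : vec d := fun _ => 1 / (INR d ^ 2).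

Definition qconst (d : nat) : R := 1 / (INR d * (INR d + 1)).

Definition polar (d : nat) (A : vset d) : vset d :=
  fun u => Hplane u /\ forall v, A v -> qconst d <= inner u v.

Definition r_out (d : nat) : R :=
  sqrt ((INR d - 1) / (INR d ^ 2 * (INR d + 1))).
Definition r_in (d : nat) : R :=
  sqrt (1 / (INR d ^ 2 * (INR d ^ 2 - 1))).

Definition Bout (d : nat) : vset d :=
  fun u => Hplane u /\ vnorm (vsub u (@cen d)) <= r_out d.
Definition Bin (d : nat) : vset d :=
  fun u => Hplane u /\ vnorm (vsub u (@cen d)) <= r_in d.

Definition ebasis (d : nat) (k : 'I_(d * d)) : vec d :=
  fun i => (1 / (INR d + 1)) * ((if k == i then 1 else 0) + 1 / INR d).

Definition Delta_e (d : nat) : vset d :=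
  fun u => exists lam : 'I_(d * d) -> R,
    (forall k, 0 <= lam k) /\ rsum lam = 1 /\
    forall i, u i = rsum (fun k => lam k * ebasis k i).

Definition vconvex (d : nat) (S : vset d) : Prop :=
  forall u v (t : R), S u -> S v -> 0 <= t <= 1 ->
    S (fun i => t * u i + (1 - t) * v i).

Definition vclosed (d : nat) (S : vset d) : Prop :=
  forall u, (forall eps, 0 < eps -> exists v, S v /\ vnorm (vsub u v) < eps) ->
    S u.

Definition cl_conv (d : nat) (X : vset d) : vset d :=
  fun u => forall S : vset d, vclosed S -> vconvex S ->
    (forall v, X v -> S v) -> S u.

Definition vunion (d : nat) (A B : vset d) : vset d := fun u => A u \/ B u.
Definition vsubset (d : nat) (A B : vset d) : Prop := forall u, A u -> B u.
Definition vseteq (d : nat) (A B : vset d) : Prop := forall u, A u <-> B u.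

Definition germ (d : nat) (A : vset d) : Prop :=
  vsubset A (@Delta d) /\
  forall p s, A p -> A s ->
    qconst d <= inner p s /\ inner p s <= 2 * qconst d.

Definition qplex (d : nat) (Q : vset d) : Prop :=
  (forall u, Q u -> Delta u /\ Bout u) /\ vseteq (polar Q) Q.

(* "uncountably many" distinct sets with property P: no sequence of sets
   enumerates them all (up to set equality). *)
Definition uncountably_many (d : nat) (P : vset d -> Prop) : Prop :=
  ~ exists f : nat -> vset d, forall Q, P Q -> exists n, vseteq (f n) Q.

(* Since G is a germ, G is contained in its polar G*, and the points s of G*
   are nonnegative (test s against the basis distributions e_k) and satisfy
   <s,s> <= 2/(d(d+1)) (test s against an antipodal point of the in-ball).
   Hence a maximal germ containing G is a qplex, and by Zorn's lemma every germ
   containing G lies in a qplex.  If G is not a qplex there is p in G* \ G, and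
   separating p from the closed convex set G gives z in G* with
   <z,p> < 1/(d(d+1)).  Pulling p and z towards the centre c yields pairs
   (z_l, p_l), l in [l0, 1], with <z_l, p_m> = 1/(d(d+1)) for l = m and
   < 1/(d(d+1)) for l < m.  So each G u {z_l, p_l} is a germ contained in some
   qplex Q_l, and Q_l differs from Q_m for l <> m: an interval's worth of
   distinct qplexes. *)

From Pilot Require Import Defs.
From Stdlib Require Import Reals Lra Classical ClassicalEpsilon.
From mathcomp Require Import all_boot.
From HB Require Import structures.
From mathcomp Require classical_sets.
Set Implicit Arguments. Unset Strict Implicit.
Local Open Scope R_scope.

HB.instance Definition _ := Monoid.isComLaw.Build R 0 Rplus
  (fun x y z => esym (Rplus_assoc x y z)) Rplus_comm Rplus_0_l.

Lemma Rdiv_lt_1 a b : 0 < b -> a < b -> a / b < 1.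
Proof.
move=> b_gt0 ab; rewrite -(Rdiv_diag b); last lra.
by apply: Rmult_lt_compat_r => //; apply: Rinv_0_lt_compat.
Qed.

Lemma Rdiv_le_1 a b : 0 < b -> a <= b -> a / b <= 1.
Proof.
move=> b_gt0 ab; rewrite -(Rdiv_diag b); last lra.
by apply: Rmult_le_compat_r => //; apply/Rlt_le/Rinv_0_lt_compat.
Qed.

Lemma Rdiv_gt_1 a b : 0 < b -> b < a -> 1 < a / b.
Proof.
move=> b_gt0 ba; rewrite -(Rdiv_diag b); last lra.
by apply: Rmult_lt_compat_r => //; apply: Rinv_0_lt_compat.
Qed.

Definition sqdist d (u v : vec d) : R := inner (vsub u v) (vsub u v).

Definition vmix d (t : R) (u v : vec d) : vec d :=
  fun i => t * u i + (1 - t) * v i.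

Section Euclidean.
Variable d : nat.
Implicit Types (u v w : vec d) (f g : 'I_(d * d) -> R).

Lemma eq_rsum f g : (forall i, f i = g i) -> rsum f = rsum g.
Proof. by move=> fg; apply: eq_bigr => i _. Qed.

Lemma rsumD f g : rsum (fun i => f i + g i) = rsum f + rsum g.
Proof. exact: big_split. Qed.

Lemma rsumZ a f : rsum (fun i => a * f i) = a * rsum f.
Proof.
apply: (big_rec2 (fun x y => x = a * y)); first by ring.
by move=> i y1 y2 _ ->; ring.
Qed.

Lemma rsum_lin a b f g :
  rsum (fun i => a * f i + b * g i) = a * rsum f + b * rsum g.
Proof. by rewrite -!rsumZ -rsumD. Qed.

Lemma rsum_ge0 f : (forall i, 0 <= f i) -> 0 <= rsum f.
Proof.
move=> f_ge0; apply: (big_ind (fun x => 0 <= x)) => //; first lra.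
by move=> x y; lra.
Qed.

Lemma rsum_const a : rsum (fun _ : 'I_(d * d) => a) = INR (d * d) * a.
Proof.
rewrite /rsum big_const_ord; elim: (d * d)%nat => [|n IH] /=; first by ring.
by rewrite IH; case: n {IH} => [|n] /=; ring.
Qed.

Lemma rsum_delta (j : 'I_(d * d)) f : rsum (fun i => if j == i then f i else 0) = f j.
Proof.
rewrite /rsum (bigD1 j) //= eqxx big1 ?Rplus_0_r //.
by move=> i /negbTE; rewrite eq_sym => ->.
Qed.

Lemma rsumB f g : rsum (fun i => f i - g i) = rsum f - rsum g.
Proof.
rewrite (@eq_rsum _ (fun i => 1 * f i + (-1) * g i)); first by rewrite rsum_lin; ring.
by move=> i; ring.
Qed.

Lemma rsum_vsub u v : rsum (vsub u v) = rsum u - rsum v.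
Proof. exact: rsumB. Qed.

Lemma innerC u v : inner u v = inner v u.
Proof. by apply: eq_rsum => i; ring. Qed.

Lemma inner_linl a b u v w :
  inner (fun i => a * u i + b * v i) w = a * inner u w + b * inner v w.
Proof. by rewrite /inner -!rsumZ -rsumD; apply: eq_rsum => i; ring. Qed.

Lemma inner_ge0 u : 0 <= inner u u.
Proof. by apply: rsum_ge0 => i; apply: Rle_0_sqr. Qed.

Lemma sqdistE u v : sqdist u v = inner u u - 2 * inner u v + inner v v.
Proof.
rewrite /sqdist /inner -!rsumZ -rsumB -!rsumD.
by apply: eq_rsum => i; rewrite /vsub; ring.
Qed.

Lemma sqdist_ge0 u v : 0 <= sqdist u v.
Proof. exact: inner_ge0. Qed.

Lemma sqdist_vv u : sqdist u u = 0.
Proof. by rewrite sqdistE; ring. Qed.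

Lemma inner_vsubr u v w : inner u (vsub v w) = inner u v - inner u w.
Proof. by rewrite /inner -rsumB; apply: eq_rsum => i; rewrite /vsub; ring. Qed.

Lemma inner_le_mean u v : inner u v <= (inner u u + inner v v) / 2.
Proof. have := inner_ge0 (vsub u v); rewrite -/(sqdist u v) sqdistE; lra. Qed.

Lemma sqdist_vmix t u v : sqdist (vmix t u v) v = t ^ 2 * sqdist u v.
Proof. by rewrite /sqdist /inner -rsumZ; apply: eq_rsum => i; rewrite /vsub /vmix; ring. Qed.

Lemma sqdist_to_vmix t w u v :
  sqdist w (vmix t u v)
  = sqdist w v - 2 * t * inner (vsub u v) (vsub w v) + t ^ 2 * sqdist u v.
Proof.
rewrite /sqdist /inner -!rsumZ -rsumB -!rsumD.
by apply: eq_rsum => i; rewrite /vsub /vmix; ring.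
Qed.

Lemma Hplane_vmix t u v : Hplane u -> Hplane v -> Hplane (vmix t u v).
Proof. by move=> Hu Hv; rewrite /Hplane rsum_lin Hu Hv; ring. Qed.

Lemma polar_convex (A : vset d) : vconvex (polar A).
Proof.
move=> u v t [Hu Pu] [Hv Pv] t01; split; first exact: (Hplane_vmix t Hu Hv).
by move=> w Aw; rewrite inner_linl; have := Pu _ Aw; have := Pv _ Aw; nra.
Qed.

Lemma cl_conv_sub (X : vset d) : vsubset X (cl_conv X).
Proof. by move=> u Xu S _ _; apply. Qed.

End Euclidean.

Section ClosedConvexSeparation.
Variables (d : nat) (G : vset d) (D : R) (y g1 : vec d).
Hypotheses (G_closed : vclosed G) (G_convex : vconvex G) (G_g1 : G g1) (y_notin : ~ G y).
Hypothesis G_bounded : forall g g', G g -> G g' -> sqdist g g' <= D.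

Lemma sqdist_inf : exists delta, [/\ 0 < delta,
  forall g, G g -> delta <= sqdist y g &
  forall eta, 0 < eta -> exists g, G g /\ sqdist y g < delta + eta].
Proof.
have [eps [eps_gt0 far]] : exists eps, 0 < eps /\ forall g, G g -> eps ^ 2 <= sqdist y g.
  apply: NNPP => none; apply: y_notin; apply: G_closed => eps eps_gt0.
  apply: NNPP => no_near; apply: none; exists eps; split => // g Gg.
  have : eps <= vnorm (vsub y g) by apply: Rnot_lt_le => lt; apply: no_near; exists g.
  rewrite /vnorm -/(sqdist y g) -{2}(pow2_sqrt _ (sqdist_ge0 y g)) => le.
  by apply: pow_incr; lra.
have [m [m_ub m_lub]] : {m | is_lub (fun r => exists g, G g /\ r = - sqdist y g) m}.
  apply: completeness; last by exists (- sqdist y g1), g1.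
  by exists 0 => r [g [_ ->]]; have := sqdist_ge0 y g; lra.
exists (- m); split.
- have : m <= - eps ^ 2 by apply: m_lub => r [g [Gg ->]]; have := far g Gg; lra.
  by have := pow_lt eps 2 eps_gt0; lra.
- by move=> g Gg; have := m_ub _ (ex_intro _ g (conj Gg erefl)); lra.
- move=> eta eta_gt0; apply: NNPP => none.
  have : m <= - (- m + eta); last lra.
  apply: m_lub => r [g [Gg ->]]; apply: Ropp_le_contravar.
  by apply: Rnot_lt_le => lt; apply: none; exists g.
Qed.

(* Moving from the almost nearest point g0 towards any g in G brings it at
   most slightly closer to y, which bounds <g - g0, y - g0> from above. *)
Lemma exists_near_projection : exists g0 delta, [/\ G g0, 0 < delta,
  delta <= sqdist y g0 & forall g, G g -> inner (vsub g g0) (vsub y g0) < delta / 2].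
Proof.
have [delta [delta_gt0 delta_le delta_inf]] := sqdist_inf.
have D_ge0 : 0 <= D by have := G_bounded G_g1 G_g1; have := sqdist_ge0 g1 g1; lra.
set t := delta / (delta + 2 * D).
have t_gt0 : 0 < t by apply: Rdiv_lt_0_compat; lra.
have t_le1 : t <= 1.
  have -> : t = 1 - 2 * D / (delta + 2 * D) by rewrite /t; field; lra.
  by have : 0 <= 2 * D / (delta + 2 * D); [apply: Rle_mult_inv_pos; lra | lra].
have tD : t * D <= delta / 2.
  have -> : t * D = delta / 2 - delta * delta / (2 * (delta + 2 * D)) by rewrite /t; field; lra.
  by have : 0 <= delta * delta / (2 * (delta + 2 * D)); [apply: Rle_mult_inv_pos; nra | lra].
have [g0 [Gg0 g0_near]] := delta_inf (t * delta / 2) ltac:(nra).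
exists g0, delta; split => //; first exact: delta_le.
move=> g Gg.
have := delta_le _ (G_convex Gg Gg0 (conj (Rlt_le _ _ t_gt0) t_le1)).
rewrite -/(vmix t g g0) sqdist_to_vmix => le.
have := G_bounded Gg Gg0 => gg0.
have : t ^ 2 * sqdist g g0 <= t * (delta / 2) by nra.
nra.
Qed.

Lemma closed_convex_separation : exists g0 a, [/\ G g0,
  a < inner y (vsub y g0) & forall g, G g -> inner g (vsub y g0) < a].
Proof.
have [g0 [delta [Gg0 delta_gt0 delta_le obtuse]]] := exists_near_projection.
exists g0, (inner g0 (vsub y g0) + delta / 2); split => //.
  have : inner y (vsub y g0) = inner g0 (vsub y g0) + sqdist y g0.
    by rewrite /sqdist !(innerC _ (vsub y g0)) !inner_vsubr; ring.
  lra.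
move=> g Gg; have := obtuse g Gg.
by rewrite !(innerC _ (vsub y g0)) !inner_vsubr; lra.
Qed.

End ClosedConvexSeparation.

Section AvoidingSequence.
Variable g : nat -> R.

Definition trisect (n : nat) (I : R * R) : R * R :=
  let: (a, b) := I in
  if Rlt_dec (g n) ((a + b) / 2) then (a + 2 * (b - a) / 3, b)
  else (a, a + (b - a) / 3).

Fixpoint avoiding_interval (I : R * R) (n : nat) : R * R :=
  if n is n'.+1 then trisect n' (avoiding_interval I n') else I.

Lemma trisect_sub n I : I.1 < I.2 ->
  [/\ I.1 <= (trisect n I).1, (trisect n I).1 < (trisect n I).2,
      (trisect n I).2 <= I.2 & g n < (trisect n I).1 \/ (trisect n I).2 < g n].
Proof. by case: I => a b /= ab; rewrite /trisect; case: Rlt_dec => /= ?; split; lra. Qed.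

Variable I : R * R.
Hypothesis I_proper : I.1 < I.2.
Local Notation J := (avoiding_interval I).

Lemma avoiding_interval_proper n : (J n).1 < (J n).2.
Proof. by elim: n => [|n IH] //=; case: (trisect_sub n IH). Qed.

Lemma avoiding_interval_decr n m :
  (J n).1 <= (J (n + m)).1 /\ (J (n + m)).2 <= (J n).2.
Proof.
elim: m => [|m [IH1 IH2]]; first by rewrite addn0; lra.
by rewrite addnS; case: (trisect_sub (n + m) (avoiding_interval_proper (n + m))) => /=; lra.
Qed.

Lemma avoiding_interval_cross n m : (J n).1 <= (J m).2.
Proof.
have [H1 _] := avoiding_interval_decr n m; have [_ H2] := avoiding_interval_decr m n.
have := avoiding_interval_proper (n + m); rewrite addnC in H2; lra.
Qed.

Lemma exists_avoiding : exists x, I.1 <= x <= I.2 /\ forall n, g n <> x.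
Proof.
have [x [x_ub x_lub]] : {x | is_lub (fun r => exists n, r = (J n).1) x}.
  apply: completeness; last by exists I.1, 0%nat.
  by exists I.2 => r [n ->]; apply: (avoiding_interval_cross n 0).
have Jl n : (J n).1 <= x by apply: x_ub; exists n.
have Ju n : x <= (J n).2 by apply: x_lub => r [m ->]; apply: avoiding_interval_cross.
exists x; split; first by split; [apply: (Jl 0%nat) | apply: (Ju 0%nat)].
move=> n gnx; case: (trisect_sub n (avoiding_interval_proper n)) => _ _ _.
by have := Jl n.+1; have := Ju n.+1 => /=; lra.
Qed.

End AvoidingSequence.

Lemma uncountably_many_of_interval d (P : vset d -> Prop) (F : R -> vset d -> Prop) a b :
  a < b ->
  (forall l, a <= l <= b -> exists Q, P Q /\ F l Q) ->
  (forall l m Q Q', a <= l -> l < m -> F l Q -> F m Q' -> ~ vseteq Q Q') ->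
  uncountably_many P.
Proof.
move=> ab exF sepF [f f_enum].
pose tag n l := a <= l <= b /\ exists Q, F l Q /\ vseteq (f n) Q.
have tag_uniq n l m : tag n l -> tag n m -> l = m.
  move=> [[al _] [Q [FQ eQ]]] [[am _] [Q' [FQ' eQ']]].
  have QQ' : vseteq Q Q' by move=> u; rewrite -eQ eQ'.
  have [lm|[//|ml]] := Rtotal_order l m; first by case: (sepF _ _ _ _ al lm FQ FQ').
  by case: (sepF _ _ _ _ am ml FQ' FQ) => u; rewrite QQ'.
pose g n := epsilon (inhabits 0) (tag n).
have [x [xab g_neq]] := exists_avoiding g (ab : (a, b).1 < (a, b).2).
have [Q [PQ FQ]] := exF x xab.
have [n eQ] := f_enum Q PQ.
have tag_x : tag n x by split=> //; exists Q.
exact: (g_neq n (tag_uniq n _ _ (epsilon_spec _ _ (ex_intro _ x tag_x)) tag_x)).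
Qed.

Section Germs.
Variable d : nat.
Implicit Types A B K Q : vset d.

Lemma germ_sub A B : germ B -> vsubset A B -> germ A.
Proof.
move=> [BD Bg] AB; split; first by move=> u /AB /BD.
by move=> p s /AB Bp /AB Bs; apply: Bg.
Qed.

Lemma exists_maximal_germ K : germ K ->
  exists Q, [/\ germ Q, vsubset K Q & forall s, germ (fun u => Q u \/ u = s) -> Q s].
Proof.
move=> [KD Kg].
have [|A [gA A_max]] := @classical_sets.Zorn_bigcup (vec d) (fun A => germ (fun u => A u \/ K u)).
  move=> F FP Ftot; split.
    by move=> u [[X FX Xu]|Ku]; [case: (FP X FX) => XD _; apply: XD; left | exact: KD].
  move=> p s [[X FX Xp]|Kp] [[Y FY Ys]|Ks].
  - have [XY|YX] := Ftot X Y FX FY.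
      by case: (FP Y FY) => _; apply; left; [apply: XY |].
    by case: (FP X FX) => _; apply; left; [|apply: YX].
  - by case: (FP X FX) => _; apply; [left | right].
  - by case: (FP Y FY) => _; apply; [right | left].
  - exact: Kg.
exists (fun u => A u \/ K u); split => //; first by move=> u Ku; right.
move=> s gs; case: (classic (A s)) => [As|nAs]; first by left.
exfalso; apply: (A_max (fun u => A u \/ u = s)).
  by split; [move=> u Au; left | move=> As; apply: nAs; apply: As; right].
apply: (germ_sub gs) => u [[Au|->]|Ku]; by [left; left | right | left; right].
Qed.

End Germs.

Section Qplexes.
Variable d : nat.
Hypothesis d_ge2 : (2 <= d)%nat.

Local Notation c := (@cen d).
Local Notation c2 := (1 / INR d ^ 2).
Local Notation q := (qconst d).
Implicit Types u v s : vec d.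

Lemma INR_d_ge2 : 2 <= INR d.
Proof. by apply: (le_INR 2); apply/leP. Qed.

Lemma c2_sub_qconst : c2 - q = 1 / (INR d ^ 2 * (INR d + 1)).
Proof. have := INR_d_ge2; rewrite /qconst => ?; field; lra. Qed.

Lemma c2_sub_qconst_gt0 : 0 < c2 - q.
Proof. have := INR_d_ge2; rewrite c2_sub_qconst => ?; apply: Rdiv_lt_0_compat; nra. Qed.

Lemma r_out_sqr : (INR d - 1) / (INR d ^ 2 * (INR d + 1)) = 2 * q - c2.
Proof. have := INR_d_ge2; rewrite /qconst => ?; field; lra. Qed.

Lemma r_out_sqr_gt0 : 0 < 2 * q - c2.
Proof. have := INR_d_ge2; rewrite -r_out_sqr => ?; apply: Rdiv_lt_0_compat; nra. Qed.

Lemma r_in_sqr : 1 / (INR d ^ 2 * (INR d ^ 2 - 1)) = (c2 - q) ^ 2 / (2 * q - c2).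
Proof. have := INR_d_ge2; rewrite c2_sub_qconst -r_out_sqr => ?; field; nra. Qed.

Lemma rsum_cen : rsum c = 1.
Proof.
have := INR_d_ge2; rewrite /cen rsum_const mult_INR => ?.
by field; lra.
Qed.

Lemma Hplane_cen : Hplane c.
Proof. exact: rsum_cen. Qed.

Lemma inner_cenl u : Hplane u -> inner c u = c2.
Proof. by move=> Hu; rewrite /inner (@eq_rsum _ _ (fun i => c2 * u i)) // rsumZ Hu Rmult_1_r. Qed.

Lemma sqdist_cen u : Hplane u -> sqdist u c = inner u u - c2.
Proof.
move=> Hu; rewrite sqdistE innerC !inner_cenl //; last exact: Hplane_cen.
by ring.
Qed.

Lemma inner_vmix_cen t u v : Hplane u -> Hplane v ->
  inner u (vmix t v c) = c2 - t * (c2 - inner u v).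
Proof.
move=> Hu Hv; rewrite innerC inner_linl (innerC v) (inner_cenl Hu).
by ring.
Qed.

Lemma qconst_le_inner_self u : Hplane u -> q <= inner u u.
Proof.
move=> Hu; have := sqdist_cen Hu; have := inner_ge0 (vsub u c).
have := c2_sub_qconst_gt0; rewrite /sqdist; lra.
Qed.

Lemma Bout_of_inner_self u : Hplane u -> inner u u <= 2 * q -> Bout u.
Proof.
move=> Hu uu; split => //; rewrite /vnorm -/(sqdist u c) sqdist_cen //.
by rewrite /r_out; apply: sqrt_le_1_alt; rewrite r_out_sqr; lra.
Qed.

Lemma Bin_of_sqdist u : Hplane u -> sqdist u c <= (c2 - q) ^ 2 / (2 * q - c2) -> Bin u.
Proof. by move=> Hu uc; split => //; rewrite /r_in r_in_sqr; apply: sqrt_le_1_alt. Qed.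

Lemma inner_ebasis u i : Hplane u -> inner u (ebasis i) = (u i + 1 / INR d) / (INR d + 1).
Proof.
move=> Hu; have := INR_d_ge2 => ?.
rewrite /inner (@eq_rsum _ _ (fun j => (if i == j then u j / (INR d + 1) else 0)
                                    + 1 / (INR d * (INR d + 1)) * u j)).
  by rewrite rsumD rsum_delta rsumZ Hu; field; lra.
by move=> j; rewrite /ebasis; case: eqP => _; field; lra.
Qed.


Section ClosedConvexGerm.
Variable G : vset d.
Hypotheses (G_closed : vclosed G) (G_convex : vconvex G) (G_germ : germ G).
Hypothesis G_hull : vsubset (cl_conv (vunion (@Delta_e d) (@Bin d))) G.

Lemma G_Hplane u : G u -> Hplane u.
Proof. by case: G_germ => GD _ /GD []. Qed.

Lemma G_sqdist_le u v : G u -> G v -> sqdist u v <= 2 * q.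
Proof.
case: G_germ => _ Gq Gu Gv; rewrite sqdistE.
by have [? ?] := Gq _ _ Gu Gu; have [? ?] := Gq _ _ Gv Gv; have [? ?] := Gq _ _ Gu Gv; lra.
Qed.

Lemma cen_in_G : G c.
Proof.
apply: G_hull; apply: cl_conv_sub; right; apply: Bin_of_sqdist; first exact: Hplane_cen.
rewrite sqdist_vv; apply: Rle_mult_inv_pos; first exact: pow2_ge_0.
exact: r_out_sqr_gt0.
Qed.

Lemma ebasis_in_G i : G (ebasis i).
Proof.
apply: G_hull; apply: cl_conv_sub; left; exists (fun j => if i == j then 1 else 0); split; [|split].
- by move=> j; case: (i == j); lra.
- exact: (rsum_delta i (fun _ => 1)).
- move=> j; rewrite -(rsum_delta i (fun k => ebasis k j)).
  by apply: eq_rsum => k; case: (i == k); ring.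
Qed.

Lemma G_sub_polar : vsubset G (polar G).
Proof.
move=> u Gu; split; first exact: G_Hplane.
by case: G_germ => _ Gq v Gv; case: (Gq _ _ Gu Gv).
Qed.

Lemma cen_in_polar : polar G c.
Proof.
split; first exact: Hplane_cen.
by move=> v Gv; rewrite (inner_cenl (G_Hplane Gv)); have := c2_sub_qconst_gt0; lra.
Qed.

Lemma polar_Delta s : polar G s -> Defs.Delta s.
Proof.
move=> [Hs ps]; split => // i; have := ps _ (ebasis_in_G i).
have := INR_d_ge2 => ?; rewrite inner_ebasis // /qconst.
have -> : (s i + 1 / INR d) / (INR d + 1) = s i / (INR d + 1) + 1 / (INR d * (INR d + 1)).
  by field; lra.
move=> le; have : 0 <= s i / (INR d + 1) by lra.
have -> : s i / (INR d + 1) = s i * / (INR d + 1) by [].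
by move/(Rmult_le_compat_r (INR d + 1)); rewrite Rmult_0_l Rmult_assoc Rinv_l; lra.
Qed.

(* If [s] were farther from [c] than the out-radius, the antipodal point
   [c - t (s - c)] of the in-ball would violate the polar inequality, where the
   choice of [t] turns the comparison into an AM-GM inequality. *)
Lemma polar_inner_self_le s : polar G s -> inner s s <= 2 * q.
Proof.
move=> [Hs ps]; apply: Rnot_lt_le => far.
have [k_gt0 ro_gt0] := (c2_sub_qconst_gt0, r_out_sqr_gt0).
set D := sqdist s c; have DE : D = inner s s - c2 by exact: sqdist_cen.
set k := c2 - q in k_gt0; set ro := 2 * q - c2 in ro_gt0.
have D_gt_ro : ro < D by rewrite /ro; lra.
set t := 2 * k / (D + ro).
have t_gt0 : 0 < t by apply: Rdiv_lt_0_compat; lra.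
have tE : t * (D + ro) = 2 * k by rewrite /t; field; lra.
have Gb : G (vmix (- t) s c).
  apply: G_hull; apply: cl_conv_sub; right; apply: Bin_of_sqdist.
    exact: Hplane_vmix Hs Hplane_cen.
  rewrite sqdist_vmix -/D -/k -/ro; apply: (Rmult_le_reg_r ro) => //.
  have -> : k ^ 2 / ro * ro = k ^ 2 by field; lra.
  have -> : k = t * (D + ro) / 2 by lra.
  have := pow2_ge_0 (t * (D - ro) / 2); nra.
have := ps _ Gb; rewrite inner_vmix_cen // (_ : c2 - inner s s = - D); last lra.
have : 0 < t * (D - ro) by apply: Rmult_lt_0_compat; lra.
rewrite /k in tE; nra.
Qed.

Lemma germ_of_polar K : vsubset K (polar G) ->
  (forall x y, K x -> K y -> q <= inner x y) -> germ K.
Proof.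
move=> KP Kq; split; first by move=> u /KP /polar_Delta.
move=> x y Kx Ky; split; first exact: Kq.
have := polar_inner_self_le (KP _ Kx); have := polar_inner_self_le (KP _ Ky).
have := inner_le_mean x y; lra.
Qed.

Lemma qplex_of_maximal_germ Q : germ Q -> vsubset G Q ->
  (forall s, germ (fun u => Q u \/ u = s) -> Q s) -> qplex Q.
Proof.
move=> [QD Qg] GQ Q_max.
have QH u : Q u -> Hplane u by move=> /QD [].
split.
  move=> u Qu; split; first exact: QD.
  by apply: Bout_of_inner_self; [exact: QH | case: (Qg _ _ Qu Qu)].
move=> s; split; last first.
  by move=> Qs; split; [exact: QH | move=> v Qv; case: (Qg _ _ Qs Qv)].
move=> [Hs Ps]; apply: Q_max; apply: germ_of_polar.
  move=> u [Qu|->]; split; [exact: QH | | done |].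
  - by move=> v /GQ Qv; case: (Qg _ _ Qu Qv).
  - by move=> v /GQ; apply: Ps.
move=> x y [Qx|->] [Qy|->].
- by case: (Qg _ _ Qx Qy).
- by rewrite innerC; apply: Ps.
- exact: Ps.
- exact: qconst_le_inner_self.
Qed.

Lemma exists_qplex_above K : germ K -> vsubset G K ->
  exists Q, [/\ qplex Q, germ Q & vsubset K Q].
Proof.
move=> gK GK; have [Q [gQ KQ Q_max]] := exists_maximal_germ gK.
exists Q; split => //; apply: qplex_of_maximal_germ => // u /GK; exact: KQ.
Qed.

Lemma exists_polar_notin : ~ qplex G -> exists p, polar G p /\ ~ G p.
Proof.
move=> not_qplex; apply: NNPP => none; apply: not_qplex; split.
  move=> u Gu; case: G_germ => GD Gq; split; first exact: GD.
  by apply: Bout_of_inner_self; [exact: G_Hplane | case: (Gq _ _ Gu Gu)].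
move=> u; split; last exact: G_sub_polar.
by move=> Pu; apply: NNPP => nGu; apply: none; exists u.
Qed.

Lemma polar_separation y : Hplane y -> ~ G y -> exists z, polar G z /\ inner z y < q.
Proof.
move=> Hy nGy.
have [g0 [a [Gg0 a_lt ag]]] :=
  closed_convex_separation G_closed G_convex cen_in_G nGy G_sqdist_le.
set v := vsub y g0 in a_lt ag *; set Y := inner y v in a_lt *.
have rsum_v : rsum v = 0 by rewrite rsum_vsub Hy (G_Hplane Gg0); ring.
have a_gt0 : 0 < a.
  have := ag _ cen_in_G; rewrite inner_vsubr (inner_cenl Hy) (inner_cenl (G_Hplane Gg0)); lra.
have k_gt0 := c2_sub_qconst_gt0; set k := c2 - q in k_gt0.
set beta := 2 * k / (a + Y).
have beta_gt0 : 0 < beta by apply: Rdiv_lt_0_compat; lra.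
have betaE : beta * (a + Y) = 2 * k by rewrite /beta; field; lra.
rewrite /k in betaE.
set z : vec d := fun i => 1 * c i + (- beta) * v i.
have z_inner x : Hplane x -> inner z x = c2 - beta * inner x v.
  by move=> Hx; rewrite inner_linl inner_cenl // (innerC v); ring.
exists z; split; last by rewrite z_inner // -/Y; nra.
split; first by rewrite /Hplane rsum_lin rsum_cen rsum_v; ring.
move=> g Gg; rewrite (z_inner _ (G_Hplane Gg)); have := ag g Gg; nra.
Qed.


Section SeparatedFamily.
Variables p z : vec d.
Hypotheses (p_polar : polar G p) (z_polar : polar G z) (zp_lt : inner z p < q).

Local Notation l0 := ((c2 - q) / (c2 - inner z p)).

(* [famZ l] and [famP l] lie on the segments from [c] to [z] and to [p], scaled
   so that [<famZ l, famP m> = c2 - (c2 - q) m / l]: each pair [{famZ l, famP l}]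
   is admissible, but [famZ l] and [famP m] are incompatible for [l < m]. *)
Let famP l := vmix l p c.
Let famZ l := vmix (l0 / l) z c.

Lemma l0_gt0 : 0 < l0.
Proof. by have := c2_sub_qconst_gt0 => ?; apply: Rdiv_lt_0_compat; lra. Qed.

Lemma l0_lt1 : l0 < 1.
Proof. by apply: Rdiv_lt_1; have := c2_sub_qconst_gt0; lra. Qed.

Lemma inner_famZ_famP l m : 0 < l -> inner (famZ l) (famP m) = c2 - (c2 - q) * m / l.
Proof.
move=> l_gt0; have [Hp Hz] := (proj1 p_polar, proj1 z_polar).
rewrite inner_linl inner_vmix_cen // inner_cenl; last exact: Hplane_vmix Hp Hplane_cen.
have := c2_sub_qconst_gt0; move: zp_lt; generalize c2 q (inner z p) => C Q Z ? ?.
by field; split; lra.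
Qed.

Lemma famP_polar l : 0 <= l <= 1 -> polar G (famP l).
Proof. by move=> l01; apply: polar_convex p_polar cen_in_polar l01. Qed.

Lemma famZ_polar l : l0 <= l -> polar G (famZ l).
Proof.
move=> l0_le; have := l0_gt0 => ?; apply: polar_convex z_polar cen_in_polar _.
split; first by apply: Rlt_le; apply: Rdiv_lt_0_compat; lra.
by apply: Rdiv_le_1; lra.
Qed.

Lemma germ_G_famP_famZ l : l0 <= l <= 1 ->
  germ (fun u => G u \/ u = famP l \/ u = famZ l).
Proof.
move=> [l0_le l_le1]; have := l0_gt0 => ?.
have [Pp Pz] : polar G (famP l) /\ polar G (famZ l).
  by split; [apply: famP_polar; lra | exact: famZ_polar].
have inner_ZP : inner (famZ l) (famP l) = q.
  by rewrite inner_famZ_famP ?Rmult_div_l; [ring | lra | lra].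
apply: germ_of_polar => [u [/G_sub_polar|[->|->]] //|x y].
have self u : polar G u -> q <= inner u u by move=> [Hu _]; exact: qconst_le_inner_self.
move=> [Gx|[->|->]] [Gy|[->|->]].
all: try by case: G_germ => _ /(_ _ _ Gx Gy) [].
all: try by apply: self.
all: try by [apply: (proj2 Pp) | apply: (proj2 Pz) | rewrite inner_ZP; lra].
all: rewrite innerC; by [apply: (proj2 Pp) | apply: (proj2 Pz) | rewrite inner_ZP; lra].
Qed.

Lemma qplexes_above_uncountable_of_pair :
  uncountably_many (fun Q => qplex Q /\ vsubset G Q).
Proof.
have := l0_gt0 => ?.
apply: (@uncountably_many_of_interval _ _
  (fun l Q => [/\ germ Q, Q (famZ l) & Q (famP l)]) _ _ l0_lt1).
  move=> l l01.
  have [Q [qQ gQ KQ]] := exists_qplex_above (germ_G_famP_famZ l01) (fun u Gu => or_introl Gu).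
  exists Q; split; first by split=> // u Gu; apply: KQ; left.
  by split=> //; apply: KQ; right; [right | left].
move=> l m Q Q' l0_le lm [[_ gQ] Zl _] [_ _ Pm] QQ'.
have [le _] := gQ _ _ Zl (proj2 (QQ' _) Pm).
suff : inner (famZ l) (famP m) < q by lra.
rewrite inner_famZ_famP -?Rmult_div_assoc; last lra.
have : 1 < m / l by apply: Rdiv_gt_1; lra.
have := c2_sub_qconst_gt0; nra.
Qed.

End SeparatedFamily.

Lemma qplexes_above_uncountable : ~ qplex G ->
  uncountably_many (fun Q => qplex Q /\ vsubset G Q).
Proof.
move=> not_qplex; have [p [Pp nGp]] := exists_polar_notin not_qplex.
have [z [Pz zp]] := polar_separation (proj1 Pp) nGp.
exact: qplexes_above_uncountable_of_pair Pp Pz zp.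
Qed.

End ClosedConvexGerm.

End Qplexes.

Theorem mainTheorem5 (d : nat) (G : vset d) :
  (2 <= d)%nat ->
  @vclosed d G -> @vconvex d G -> @germ d G ->
  @vsubset d (@cl_conv d (@vunion d (@Delta_e d) (@Bin d))) G ->
  ~ @qplex d G ->
  @uncountably_many d (fun Q => @qplex d Q /\ @vsubset d G Q).
Proof. move=> d_ge2 G_closed G_convex G_germ G_hull; exact: qplexes_above_uncountable. Qed.
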